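(* Let $\mathfrak g$ be a finite-dimensional complex simple Lie algebra, $\lambda\in P^+$, and $\boldsymbol\lambda=(\lambda_1,\lambda_2),\boldsymbol\mu=(\mu_1,\mu_2)\in P^+(\lambda,2)$. Then $\boldsymbol\lambda\sim\boldsymbol\mu$ if and only if $\boldsymbol\mu\in\{(\lambda_1,\lambda_2),(\lambda_2,\lambda_1)\}$.
   Context: $\mathfrak g$ has positive roots $R^+$, coroots $h_\alpha$, dominant integral weights $P^+$. $P^+(\lambda,2)=\{(\lambda_1,\lambda_2)\in(P^+)^2:\lambda_1+\lambda_2=\lambda\}$; $(\lambda_1,\lambda_2)\sim(\mu_1,\mu_2)$ means $\min\{\lambda_1(h_\alpha),\lambda_2(h_\alpha)\}=\min\{\mu_1(h_\alpha),\mu_2(h_\alpha)\}$ for all $\alpha\in R^+$. *)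

From HB Require Import structures.
From mathcomp Require Import all_boot all_order all_algebra.
Set Implicit Arguments. Unset Strict Implicit. Unset Printing Implicit Defensive.
Import Order.TTheory GRing.Theory Num.Theory.
Local Open Scope ring_scope.

(* Finite-dimensional complex simple Lie algebras, up to isomorphism, are
   classified by their Cartan type. *)
Inductive cartan_type : Type :=
| TA of nat | TB of nat | TC of nat | TD of nat | TE of nat | TF4 | TG2.

Definition valid_type (t : cartan_type) : bool :=
  match t with
  | TA n => (1 <= n)%N
  | TB n => (2 <= n)%N
  | TC n => (2 <= n)%N
  | TD n => (4 <= n)%N
  | TE n => (6 <= n <= 8)%N
  | TF4 | TG2 => true
  end.

Definition rank (t : cartan_type) : nat :=
  match t with
  | TA n | TB n | TC n | TD n | TE n => n
  | TF4 => 4%N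
  | TG2 => 2%N
  end.

Definition edge (i j a b : nat) : bool :=
  ((i == a) && (j == b)) || ((i == b) && (j == a)).

Definition chain_adj (i j : nat) : bool := (i == j.+1) || (j == i.+1).

(* Cartan matrix (0-indexed), Kac convention: a_ij = alpha_j(h_i). *)
Definition cartan (t : cartan_type) (i j : nat) : int :=
  if i == j then 2 else
  match t with
  | TA n => if chain_adj i j then -1 else 0
  | TB n => if (i == n.-1) && (j == n.-2) then -2
            else if chain_adj i j then -1 else 0
  | TC n => if (i == n.-2) && (j == n.-1) then -2
            else if chain_adj i j then -1 else 0
  | TD n => if (chain_adj i j && (maxn i j <= n.-2)%N) || edge i j (n - 3)%N n.-1
            then -1 else 0
  | TE n => (* Bourbaki labelling 1..8 shifted to 0..7:
               edges 1-3,3-4,4-5,5-6,6-7,7-8,2-4 *)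
            if [|| edge i j 0 2, edge i j 1 3, edge i j 2 3, edge i j 3 4,
                   edge i j 4 5, edge i j 5 6 | edge i j 6 7]
            then -1 else 0
  | TF4 => if (i == 2%N) && (j == 1%N) then -2
           else if chain_adj i j then -1 else 0
  | TG2 => if (i == 0%N) && (j == 1%N) then -3
           else if chain_adj i j then -1 else 0
  end.

(* Elements of the Cartan subalgebra spanned (over Z) by the simple coroots
   h_0, ..., h_{r-1}, written in coordinates. *)
Definition hvec (t : cartan_type) := {ffun 'I_(rank t) -> int}.

Definition simple_coroot (t : cartan_type) (i : 'I_(rank t)) : hvec t :=
  [ffun j => ((i == j) : nat)%:Z].

(* alpha_i(h) for h = sum_k h_k h_k *)
Definition root_on (t : cartan_type) (i : 'I_(rank t)) (h : hvec t) : int :=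
  \sum_(k < rank t) h k * cartan t k i.

Definition sreflect (t : cartan_type) (i : 'I_(rank t)) (h : hvec t) : hvec t :=
  [ffun j => h j - root_on i h * ((i == j) : nat)%:Z].

(* The coroots h_alpha (alpha a root) form the Weyl-group orbit of the
   simple coroots. *)
Inductive is_coroot (t : cartan_type) : hvec t -> Prop :=
| coroot_simple (i : 'I_(rank t)) : is_coroot (simple_coroot i)
| coroot_reflect (i : 'I_(rank t)) (h : hvec t) :
    is_coroot h -> is_coroot (sreflect i h).

(* h_alpha for alpha in R^+: the coroots with nonnegative coordinates. *)
Definition pos_coroot (t : cartan_type) (h : hvec t) : Prop :=
  is_coroot h /\ forall j, 0 <= h j.

(* Dominant integral weights, in fundamental weight coordinates:
   lam i = lam(h_i). *)
Definition weight (t : cartan_type) := {ffun 'I_(rank t) -> nat}.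

Definition wpair (t : cartan_type) (lam : weight t) (h : hvec t) : int :=
  \sum_(j < rank t) h j * (lam j)%:Z.

Definition in_P2 (t : cartan_type) (lam l1 l2 : weight t) : Prop :=
  forall i, (l1 i + l2 i)%N = lam i.

Definition sim2 (t : cartan_type) (l1 l2 m1 m2 : weight t) : Prop :=
  forall h : hvec t, pos_coroot h ->
    Order.min (wpair l1 h) (wpair l2 h) = Order.min (wpair m1 h) (wpair m2 h).

From HB Require Import structures.
From mathcomp Require Import all_boot all_order all_algebra.
From mathcomp Require Import zify.
Set Implicit Arguments. Unset Strict Implicit. Unset Printing Implicit Defensive.
Import Order.TTheory GRing.Theory Num.Theory.
Local Open Scope ring_scope.

(* Since l1 + l2 = m1 + m2 = lam and min(x, y) = (x + y - |x - y|) / 2, the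
   relation says |(m1 - m2)(h)| = |(l1 - l2)(h)| for every positive coroot h;
   we show that this forces m1 - m2 = +-(l1 - l2), which gives the claim.
   The coroots used are sums h_{q_a} + ... + h_{q_{c-1}} along a "simple
   chain" q of the Dynkin diagram (consecutive nodes joined by a simple edge,
   non-consecutive nodes not joined); they are obtained from a simple coroot
   by successive simple reflections.  On a chain, the prefix sums of l1 - l2
   and m1 - m2 are then isometric point sets of Z containing 0, hence agree
   up to a sign, and so do the coordinates along the chain.  Finally, in
   every Dynkin diagram any two nodes lie on a common simple chain, so the
   signs obtained on the various chains are all the same. *)

Lemma pair_sign (a b c d : int) :
  `|c| = `|a| -> `|d| = `|b| -> `|d - c| = `|b - a| ->
  (c = a /\ d = b) \/ (c = - a /\ d = - b).
Proof. nia. Qed.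

Lemma uniform_sign (I : finType) (D E : I -> int) :
  (forall x y, (E x = D x /\ E y = D y) \/ (E x = - D x /\ E y = - D y)) ->
  (forall x, E x = D x) \/ (forall x, E x = - D x).
Proof.
move=> pairwise.
have [/forallP allD | /forallPn [x0 /eqP E0]] := boolP [forall x, E x == D x].
  by left => x; apply/eqP.
right => y; have [[Ex0 _] | [_ Ey]] := pairwise x0 y; [by case: E0 | exact: Ey].
Qed.

Definition simple_chain (t : cartan_type) (s : seq nat) : Prop :=
  [/\ {in s, forall k, k < rank t}%N,
      forall b, (b.+1 < size s)%N -> cartan t (nth 0 s b) (nth 0 s b.+1) = -1
    & forall i b, (i < b)%N -> (b.+1 < size s)%N ->
        cartan t (nth 0 s i) (nth 0 s b.+1) = 0].

Lemma sum_delta n (k0 : 'I_n) (f : 'I_n -> int) :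
  \sum_(k < n) ((k0 == k) : nat)%:Z * f k = f k0.
Proof.
rewrite (bigD1 k0) //= eqxx mul1r big1 ?addr0 // => k /negbTE.
by rewrite eq_sym => ->; rewrite mul0r.
Qed.

Section ChainSegments.
Variables (t : cartan_type) (k0 : 'I_(rank t)) (s : seq nat).

Definition node (i : nat) : 'I_(rank t) := insubd k0 (nth 0 s i).

Definition segment (a c : nat) : hvec t :=
  [ffun k => \sum_(a <= i < c) ((node i == k) : nat)%:Z].

Lemma wpair_segment (l : weight t) a c :
  wpair l (segment a c) = \sum_(a <= i < c) (l (node i))%:Z.
Proof.
rewrite /wpair; under eq_bigr => k _ do rewrite ffunE mulr_suml.
by rewrite exchange_big; apply: eq_bigr => i _; rewrite sum_delta.
Qed.

Lemma root_on_segment j a c :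
  root_on j (segment a c) = \sum_(a <= i < c) cartan t (node i) j.
Proof.
rewrite /root_on; under eq_bigr => k _ do rewrite ffunE mulr_suml.
rewrite exchange_big; apply: eq_bigr => i _.
exact: (sum_delta (node i) (fun k : 'I_(rank t) => cartan t k j)).
Qed.

Hypothesis chain_s : simple_chain t s.

Lemma node_val i : (i < size s)%N -> val (node i) = nth 0 s i.
Proof.
case: chain_s => in_range _ _ lt_i.
by rewrite val_insubd in_range // mem_nth.
Qed.

(* Each segment of a simple chain is a coroot: adding the next node is the
   simple reflection at that node, as alpha_{s_c} takes the value -1 on
   h_{s_a} + ... + h_{s_{c-1}}. *)
Lemma segment_coroot a c : (a < c <= size s)%N -> is_coroot (segment a c).
Proof.
elim: c => // c IHc /andP [lt_ac le_cs].
case: chain_s => _ adj_prev nonadj_earlier.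
have [lt_ac' | ge_ac] := ltnP a c; last first.
  have -> : c = a by lia.
  have -> : segment a a.+1 = simple_coroot (node a).
    by apply/ffunP => k; rewrite !ffunE big_nat1.
  exact: coroot_simple.
have root_m1 : root_on (node c) (segment a c) = -1.
  rewrite root_on_segment.
  case: c IHc lt_ac le_cs lt_ac' => [|b] // _ _ le_bs lt_ab.
  rewrite big_nat_recr //= big1_seq ?add0r.
    by rewrite !node_val ?adj_prev //; lia.
  move=> i /andP [_]; rewrite mem_iota => /andP [_ lt_ib].
  rewrite !node_val ?nonadj_earlier //; lia.
have -> : segment a c.+1 = sreflect (node c) (segment a c).
  apply/ffunP => k; rewrite !ffunE root_m1 big_nat_recr /=; last lia.
  by rewrite mulN1r opprK.
by apply: coroot_reflect; apply: IHc; lia.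
Qed.

Lemma segment_pos_coroot a c : (a < c <= size s)%N -> pos_coroot (segment a c).
Proof.
by move=> ac; split; [exact: segment_coroot | move=> j; rewrite ffunE sumr_ge0].
Qed.

End ChainSegments.

Definition wdiff (t : cartan_type) (l1 l2 : weight t) (k : 'I_(rank t)) : int :=
  (l1 k)%:Z - (l2 k)%:Z.

Lemma wpair_P2 t (lam l1 l2 : weight t) (h : hvec t) : in_P2 lam l1 l2 ->
  wpair l1 h + wpair l2 h = wpair lam h.
Proof.
move=> P2l; rewrite /wpair -big_split /=; apply: eq_bigr => j _.
by rewrite -mulrDr -P2l PoszD.
Qed.

(* Since the sums agree, equal minima mean equal gaps |l1(h) - l2(h)|. *)
Lemma sim2_gap t (lam l1 l2 m1 m2 : weight t) (h : hvec t) :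
  in_P2 lam l1 l2 -> in_P2 lam m1 m2 -> sim2 l1 l2 m1 m2 -> pos_coroot h ->
  `|wpair m1 h - wpair m2 h| = `|wpair l1 h - wpair l2 h|.
Proof.
move=> P2l P2m sim pos_h; have := sim h pos_h.
have := wpair_P2 h P2l; have := wpair_P2 h P2m; lia.
Qed.

Definition chain_connected (t : cartan_type) : Prop :=
  forall j k : 'I_(rank t),
    exists2 s, simple_chain t s & (val j \in s) && (val k \in s).

Section ChainSign.
Variables (t : cartan_type) (lam l1 l2 m1 m2 : weight t).
Hypotheses (P2l : in_P2 lam l1 l2) (P2m : in_P2 lam m1 m2).
Hypothesis sim : sim2 l1 l2 m1 m2.

(* Along a simple chain, m1 - m2 = +-(l1 - l2): the prefix sums D, E of the
   coordinates satisfy |E y - E x| = |D y - D x| by segment_pos_coroot, and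
   D 0 = E 0 = 0. *)
Lemma chain_sign k0 s : simple_chain t s ->
  (forall i, (i < size s)%N ->
     wdiff m1 m2 (node k0 s i) = wdiff l1 l2 (node k0 s i)) \/
  (forall i, (i < size s)%N ->
     wdiff m1 m2 (node k0 s i) = - wdiff l1 l2 (node k0 s i)).
Proof.
move=> chain_s.
pose D x := \sum_(0 <= i < x) wdiff l1 l2 (node k0 s i).
pose E x := \sum_(0 <= i < x) wdiff m1 m2 (node k0 s i).
have split_sum (f : nat -> int) x y : (x <= y)%N ->
    \sum_(0 <= i < y) f i - \sum_(0 <= i < x) f i = \sum_(x <= i < y) f i.
  by move=> le_xy; rewrite (big_cat_nat (leq0n x) le_xy) /= addrAC subrr add0r.
have gap x y : (x <= y <= size s)%N -> `|E y - E x| = `|D y - D x|.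
  move=> /andP [le_xy le_ys]; rewrite !split_sum //.
  have [lt_xy | ge_xy] := ltnP x y; last by rewrite !big_geq.
  have := sim2_gap P2l P2m sim (@segment_pos_coroot t k0 s chain_s x y _).
  by rewrite !wpair_segment -!sumrB; apply; rewrite lt_xy.
have E0 : E 0%N = 0 by rewrite /E big_geq.
have D0 : D 0%N = 0 by rewrite /D big_geq.
have pairwise (x y : 'I_(size s).+1) :
    (E x = D x /\ E y = D y) \/ (E x = - D x /\ E y = - D y).
  wlog le_xy : x y / (x <= y)%N.
    by move=> sym; case: (leqP x y) => [/sym | /ltnW /sym]; tauto.
  have le_ys : (y <= size s)%N by rewrite -ltnS.
  have le_xs : (x <= size s)%N := leq_trans le_xy le_ys.
  apply: pair_sign; last by apply: gap; rewrite le_xy.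
    by have := gap 0%N x; rewrite E0 D0 !subr0; apply.
  by have := gap 0%N y; rewrite E0 D0 !subr0; apply.
have step i : E i.+1 - E i = wdiff m1 m2 (node k0 s i)
    /\ D i.+1 - D i = wdiff l1 l2 (node k0 s i).
  by split; rewrite /E /D big_nat_recr // addrAC subrr add0r.
have on_nat (G : int -> int) : (forall x : 'I_(size s).+1, E x = G (D x)) ->
    forall x, (x <= size s)%N -> E x = G (D x).
  by move=> EG x; rewrite -ltnS => lt_xs; exact: (EG (Ordinal lt_xs)).
have [ED | ED] := uniform_sign pairwise; [left | right] => i lt_is;
  have [<- <-] := step i.
- by rewrite !(on_nat id ED) ?(ltnW lt_is).
- by rewrite !(on_nat -%R ED) ?(ltnW lt_is) // opprK addrC opprB.
Qed.

(* Chains covering every pair of nodes make the sign global. *)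
Lemma global_sign : chain_connected t ->
  (forall k, wdiff m1 m2 k = wdiff l1 l2 k) \/
  (forall k, wdiff m1 m2 k = - wdiff l1 l2 k).
Proof.
move=> connected; apply: uniform_sign => j k.
have [s chain_s /andP [js ks]] := connected j k.
have at_node x : val x \in s -> node j s (index (val x) s) = x.
  by move=> xs; apply: val_inj; rewrite node_val ?nth_index ?index_mem.
have [signs | signs] := chain_sign j chain_s; [left | right];
  by split; [rewrite -(at_node j js) | rewrite -(at_node k ks)];
  apply: signs; rewrite index_mem.
Qed.

End ChainSign.

Lemma pair_of_wdiff t (lam l1 l2 m1 m2 : weight t) :
  in_P2 lam l1 l2 -> in_P2 lam m1 m2 ->
  (forall k, wdiff m1 m2 k = wdiff l1 l2 k) \/
  (forall k, wdiff m1 m2 k = - wdiff l1 l2 k) ->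
  (m1, m2) = (l1, l2) \/ (m1, m2) = (l2, l1).
Proof.
move=> P2l P2m [sgn | sgn]; [left | right]; congr pair; apply/ffunP => k;
  move: (sgn k) (P2l k) (P2m k); rewrite /wdiff;
  move: (l1 k) (l2 k) (m1 k) (m2 k) (lam k) => a b c d e; lia.
Qed.

Definition simple_chainb (t : cartan_type) (s : seq nat) : bool :=
  [&& all (fun k => k < rank t)%N s,
      all (fun b => cartan t (nth 0 s b) (nth 0 s b.+1) == -1)
          (iota 0 (size s).-1)
    & all (fun b => all (fun i => cartan t (nth 0 s i) (nth 0 s b.+1) == 0)
                        (iota 0 b))
          (iota 0 (size s).-1)].

Lemma simple_chainP t s : simple_chainb t s -> simple_chain t s.
Proof.
case/and3P => /allP in_range /allP adj /allP nonadj; split.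
- exact: in_range.
- by move=> b lt_bs; apply/eqP/adj; rewrite mem_iota; lia.
- move=> i b lt_ib lt_bs; apply/eqP.
  have b_range : b \in iota 0 (size s).-1 by rewrite mem_iota; lia.
  have /allP nonadj_b := nonadj b b_range.
  by apply: nonadj_b; rewrite mem_iota.
Qed.

Definition covered_by (t : cartan_type) (ss : seq (seq nat)) : bool :=
  all (simple_chainb t) ss &&
  all (fun j => all (fun k => has (fun s => (j \in s) && (k \in s)) ss)
                    (iota 0 (rank t)))
      (iota 0 (rank t)).

Lemma covered_connected t ss : covered_by t ss -> chain_connected t.
Proof.
case/andP => /allP chains /allP cover j k.
have in_nodes (x : 'I_(rank t)) : val x \in iota 0 (rank t).
  by rewrite mem_iota /=.
have /hasP [s ss_s jk_s] := allP (cover _ (in_nodes j)) _ (in_nodes k).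
by exists s; first exact/simple_chainP/chains.
Qed.

(* Evaluates a Cartan matrix entry at symbolic indices by case analysis. *)
Ltac cartan_entry := rewrite /cartan /chain_adj /edge /=;
  repeat (match goal with
  | |- context [(?a <= ?b)%N] => case: (leqP a b) => ?
  | |- context [(?a == ?b)%N] => case: (@eqP nat a b) => ?
  end; simpl); try lia.

Lemma spanning_connected t s : simple_chain t s ->
  (forall k, (k < rank t)%N -> k \in s) -> chain_connected t.
Proof.
by move=> chain_s spans j k; exists s => //; rewrite !spans ?ltn_ord.
Qed.

Lemma iota_chain t m : (m <= rank t)%N ->
  (forall b, (b.+1 < m)%N -> cartan t b b.+1 = -1) ->
  (forall i b, (i < b)%N -> (b.+1 < m)%N -> cartan t i b.+1 = 0) ->
  simple_chain t (iota 0 m).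
Proof.
move=> le_m adj nonadj; split; rewrite ?size_iota.
- by move=> k; rewrite mem_iota; lia.
- by move=> b lt_bm; rewrite !nth_iota ?adj //; lia.
- by move=> i b lt_ib lt_bm; rewrite !nth_iota ?nonadj //; lia.
Qed.

(* In types A, B, C one chain runs through the whole diagram (in type C
   backwards, from the long root to the short ones). *)
Lemma A_connected n : chain_connected (TA n).
Proof.
apply: (spanning_connected (s := iota 0 n)); last by move=> k; rewrite mem_iota.
by apply: iota_chain => // [b | i b] *; cartan_entry.
Qed.

Lemma B_connected n : chain_connected (TB n).
Proof.
apply: (spanning_connected (s := iota 0 n)); last by move=> k; rewrite mem_iota.
by apply: iota_chain => // [b | i b] *; cartan_entry.
Qed.

Lemma C_connected n : chain_connected (TC n).
Proof.
pose s := [seq n.-1 - i | i <- iota 0 n]%N.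
have nth_s i : (i < n)%N -> nth 0%N s i = (n.-1 - i)%N.
  by move=> lt_in; rewrite (nth_map 0%N) ?size_iota ?nth_iota.
apply: (spanning_connected (s := s)).
  split; rewrite ?size_map ?size_iota.
  - by move=> k /mapP [i]; rewrite mem_iota => ? ->; simpl; lia.
  - by move=> b lt_bn; rewrite !nth_s; [cartan_entry | lia | lia].
  - by move=> i b lt_ib lt_bn; rewrite !nth_s; [cartan_entry | lia | lia].
move=> k /= lt_kn; apply/mapP; exists (n.-1 - k)%N; rewrite ?mem_iota /=; lia.
Qed.

(* In type D_n, every two nodes lie on one of the chains 0, ..., n-2 and
   0, ..., n-3, n-1 (the two long legs) and n-2, n-3, n-1 (across the fork). *)
Lemma D_connected n : (4 <= n)%N -> chain_connected (TD n).
Proof.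
move=> ge4_n.
pose a := iota 0 n.-1.
pose b := rcons (iota 0 (n - 2)) n.-1.
pose c := [:: n - 2; n - 3; n.-1]%N.
have chain_a : simple_chain (TD n) a.
  by apply: iota_chain => /= [|x|i x] *; [lia | cartan_entry | cartan_entry].
have chain_b : simple_chain (TD n) b.
  have nth_b i : (i < n.-1)%N ->
      nth 0%N b i = if (i < n - 2)%N then i else n.-1.
    move=> lt_i; rewrite nth_rcons size_iota.
    by case: ifP => lt_in2; rewrite ?nth_iota //; case: eqP => //; lia.
  split; rewrite ?size_rcons ?size_iota.
  - by move=> k; rewrite mem_rcons in_cons mem_iota /=; lia.
  - by move=> x lt_x; rewrite !nth_b; [cartan_entry | lia | lia].
  - by move=> i x lt_ix lt_x; rewrite !nth_b; [cartan_entry | lia | lia].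
have chain_c : simple_chain (TD n) c.
  split => /=.
  - by move=> k; rewrite !inE; lia.
  - by case=> [|[|x]] //= _; cartan_entry.
  - by case=> [|i] [|[|x]] //= _ _; cartan_entry.
move=> [j /= lt_j] [k /= lt_k] /=.
have [jk_a | not_a] := boolP ((j < n.-1) && (k < n.-1))%N.
  by exists a => //; rewrite !mem_iota.
have [jk_b | not_b] := boolP ((j != n - 2) && (k != n - 2))%N.
  by exists b => //; rewrite !mem_rcons !in_cons !mem_iota; lia.
by exists c => //; rewrite !inE; lia.
Qed.

(* In types E_6, E_7, E_8 (Bourbaki labels shifted by one) the analogous three
   chains pass through the branch node 3; in F_4 and G_2 a single chain. *)
Lemma E_connected n : (6 <= n <= 8)%N -> chain_connected (TE n).
Proof.
move=> n_range; apply: (covered_connected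
  (ss := [:: 0 :: iota 2 (n - 2); 1 :: iota 3 (n - 3); [:: 0; 2; 3; 1]]%N)).
by have [-> | [-> | ->]] : (n = 6 \/ n = 7 \/ n = 8)%N by lia.
Qed.

Lemma F4_connected : chain_connected TF4.
Proof. exact: (covered_connected (ss := [:: iota 0 4])). Qed.

Lemma G2_connected : chain_connected TG2.
Proof. exact: (covered_connected (ss := [:: [:: 1; 0]]%N)). Qed.

Lemma dynkin_chain_connected t : valid_type t -> chain_connected t.
Proof.
case: t => [n | n | n | n | n | |] /= valid.
- exact: A_connected.
- exact: B_connected.
- exact: C_connected.
- exact: D_connected.
- exact: E_connected.
- exact: F4_connected.
- exact: G2_connected.
Qed.

Theorem lemma5p5 (t : cartan_type) (ht : valid_type t)
  (lam l1 l2 m1 m2 : weight t) :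
  in_P2 lam l1 l2 -> in_P2 lam m1 m2 ->
  (sim2 l1 l2 m1 m2 <-> ((m1, m2) = (l1, l2) \/ (m1, m2) = (l2, l1))).
Proof.
move=> P2l P2m; split; last first.
  by case=> [[-> ->] | [-> ->]] h _; rewrite // minC.
move=> sim; apply: (pair_of_wdiff P2l P2m).
exact: (global_sign P2l P2m sim (dynkin_chain_connected ht)).
Qed.
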